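(* Let $G=(V,E)$ be an undirected graph without self-loops, let $\succ$ be a strict total order on $V$, and let $u\ne v$ be vertices with $u$ dominating $v$ and $u\succ v$. Let $\mathcal D$ be a set of constraints of the form $x+\bar y\ge1$ with $x\ne y$, $x$ dominating $y$, $x\succ y$, and ($x=u$ or $x\succ u$), such that $\mathcal D$ contains $x+\bar y\ge1$ for every pair of distinct vertices $(x,y)$ with $x$ dominating $y$, $x\succ y$ and $x\succ u$. Let $\omega$ be the substitution swapping $u$ and $v$ ($u\mapsto v$, $v\mapsto u$, identity elsewhere). Then for every $k\in\mathbb Z\cup\{\infty\}$, $$F_G\cup\mathcal D\cup\{f\le k-1\}\cup\{\neg(u+\bar v\ge1)\}\ \vdash\ (F_G\cup\mathcal D\cup\{u+\bar v\ge1\})|_\omega\cup\{f|_\omega\le f\},$$ i.e. the redundance-based strengthening condition (with the trivial preorder) holds for deriving $u+\bar v\ge1$ from core set $F_G$ and derived set $\mathcal D$.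
   Context: Each vertex $w\in V$ is identified with a Boolean variable ($w=1$ meaning $w$ is in the clique). $F_G$ is the PB formula consisting of $\bar a+\bar b\ge1$ for all distinct non-adjacent $a,b\in V$; the objective is $f=\sum_{w\in V}\bar w$ (to be minimized). $N(w)=\{w':(w,w')\in E\}$; for distinct $a,b$, $a$ dominates $b$ if $N(a)\setminus\{b\}\supseteq N(b)\setminus\{a\}$. A literal is a variable or its negation $\bar x=1-x$; a PB constraint is $\sum_i a_i\ell_i\ge A$ with negation $\sum_i -a_i\ell_i\ge -A+1$. For a substitution $\omega$, $C|_\omega$ replaces each literal by its image ($\omega(\bar x)=\overline{\omega(x)}$), $G|_\omega$ and $f|_\omega$ likewise. $\vdash$ denotes cutting planes derivability (axioms, literal axioms $\ell\ge0$, positive integer linear combinations, division with rounding up), extended so that $H\vdash D$ whenever $0\ge1$ is derivable from $H\cup\{\neg D\}$; $H\vdash S$ for a set means for each member. $f\le\infty-1$ is the trivially true constraint. *)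

From mathcomp Require Import all_boot all_order all_algebra.
Set Implicit Arguments. Unset Strict Implicit. Unset Printing Implicit Defensive.
Import Order.TTheory GRing.Theory Num.Theory.
Local Open Scope ring_scope.

Section PB.
Variable V : finType.

Inductive lit := Pos of V | Neg of V.

Definition lneg (l : lit) : lit := match l with Pos x => Neg x | Neg x => Pos x end.

(* a PB constraint  sum_i a_i l_i >= A  (literal form, as written) *)
Record pbc := PBC { pb_terms : seq (int * lit); pb_deg : int }.

Definition pbneg (C : pbc) : pbc :=
  PBC [seq (- t.1, t.2) | t <- pb_terms C] (- pb_deg C + 1).

Definition subst := V -> lit.
Definition lsubst (w : subst) (l : lit) : lit :=
  match l with Pos x => w x | Neg x => lneg (w x) end.
Definition tsubst (w : subst) (s : seq (int * lit)) :=
  [seq (t.1, lsubst w t.2) | t <- s].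
Definition pbsubst (w : subst) (C : pbc) : pbc :=
  PBC (tsubst w (pb_terms C)) (pb_deg C).

(* canonical (variable) form: sum_x c_x x >= B, using ~x = 1 - x *)
Definition vform := ({ffun V -> int} * int)%type.

Definition lcoef (x : V) (t : int * lit) : int :=
  match t.2 with Pos y => if y == x then t.1 else 0
               | Neg y => if y == x then - t.1 else 0 end.
Definition lconst (t : int * lit) : int :=
  match t.2 with Pos _ => 0 | Neg _ => t.1 end.

Definition norm (C : pbc) : vform :=
  ([ffun x => \sum_(t <- pb_terms C) lcoef x t],
   pb_deg C - \sum_(t <- pb_terms C) lconst t).

Definition vadd (C1 C2 : vform) : vform :=
  ([ffun x => C1.1 x + C2.1 x], C1.2 + C2.2).
Definition vscale (c : int) (C : vform) : vform :=
  ([ffun x => c * C.1 x], c * C.2).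

(* ceiling of a / d for d > 0 *)
Definition ceilz (a d : int) : int := - ((- a) %/ d)%Z.

(* division by d > 0 with rounding up, applied to the literal-normalized form
   (nonnegative coefficients, each variable once):
   c_x >= 0 gives literal x with coefficient c_x,
   c_x < 0 gives literal ~x with coefficient -c_x (degree shifted by -c_x). *)
Definition vdiv (d : int) (C : vform) : vform :=
  let A := C.2 + \sum_(x : V) (if C.1 x < 0 then - C.1 x else 0) in
  ([ffun x => if C.1 x < 0 then - ceilz (- C.1 x) d else ceilz (C.1 x) d],
   ceilz A d - \sum_(x : V) (if C.1 x < 0 then ceilz (- C.1 x) d else 0)).

Definition lit_axiom (l : lit) : pbc := PBC [:: (1, l)] 0.

Inductive cpder (H : pbc -> Prop) : vform -> Prop :=
| cp_ax C : H C -> cpder H (norm C)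
| cp_lit l : cpder H (norm (lit_axiom l))
| cp_add C1 C2 : cpder H C1 -> cpder H C2 -> cpder H (vadd C1 C2)
| cp_mul c C : 0 < c -> cpder H C -> cpder H (vscale c C)
| cp_div d C : 0 < d -> cpder H C -> cpder H (vdiv d C).

Definition vfalse : vform := ([ffun=> 0], 1).

Definition pbU (H1 H2 : pbc -> Prop) : pbc -> Prop := fun C => H1 C \/ H2 C.
Definition pb1 (D : pbc) : pbc -> Prop := fun C => C = D.
Definition setsubst (w : subst) (S : pbc -> Prop) : pbc -> Prop :=
  fun C => exists C0, S C0 /\ C = pbsubst w C0.

Definition implies (H : pbc -> Prop) (D : pbc) : Prop :=
  cpder H (norm D) \/ cpder (pbU H (pb1 (pbneg D))) vfalse.
Definition implies_set (H S : pbc -> Prop) : Prop :=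
  forall D, S D -> implies H D.

End PB.

Arguments Pos {V}.
Arguments Neg {V}.

Section Clique.
Variable V : finType.
Variable E : rel V.

Definition FG : pbc V -> Prop := fun C =>
  exists a b : V, a != b /\ ~~ E a b /\ C = PBC [:: (1, Neg a); (1, Neg b)] 1.

Definition fobj : seq (int * lit V) := [seq (1, Neg w) | w <- enum V].

(* f <= k - 1, i.e.  sum_w -1 * ~w >= -(k-1); for k = oo the trivial constraint *)
Definition f_le_km1 (k : option int) : pbc V :=
  match k with
  | Some k => PBC [seq (- t.1, t.2) | t <- fobj] (- (k - 1))
  | None => PBC [::] 0
  end.

(* f|_w <= f, i.e.  f - f|_w >= 0 *)
Definition fsubst_le_f (w : subst V) : pbc V :=
  PBC (fobj ++ [seq (- t.1, t.2) | t <- tsubst w fobj]) 0.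

Definition nbhd (w : V) : {set V} := [set w' | E w w'].

Definition dominates (a b : V) : bool := (nbhd b :\ a) \subset (nbhd a :\ b).

Definition domcl (x y : V) : pbc V := PBC [:: (1, Pos x); (1, Neg y)] 1.

Definition swap (u v : V) : subst V :=
  fun x => if x == u then Pos v else if x == v then Pos u else Pos x.

End Clique.

Arguments pb1 {V}.
Arguments pbU {V}.
Arguments setsubst {V}.
Arguments implies_set {V}.
Arguments f_le_km1 {V}.
Arguments fsubst_le_f {V}.
Arguments swap {V}.
Arguments domcl {V}.
Arguments pbneg {V}.

From mathcomp Require Import all_boot all_order all_algebra perm.
Import Order.TTheory GRing.Theory Num.Theory.
Local Open Scope ring_scope.
Set Implicit Arguments. Unset Strict Implicit.

(* The negation of [u + ~v >= 1] normalizes to [v - u >= 1], so every clause containing the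
   literal [v] or [~u] is derivable outright.  The swap [omega] turns a non-edge clause [~a + ~b]
   of [F_G] either into a clause with [~u] (when [v] is an endpoint) or into another non-edge
   clause, since a non-neighbour of the dominator [u] is a non-neighbour of [v].  A clause
   [x + ~y] of [D] with [x = u] becomes [v + ~y']; otherwise [x > u] is fixed by [omega], which
   turns [x + ~v] into [x + ~u], turns [x + ~u] into [x + ~v] (in [D] by transitivity of
   domination and of [>]), and fixes the rest.  Finally [f|_omega = f] as [omega] only permutes
   variables. *)

Section Normalization.
Variable V : finType.

Lemma norm_cat (s1 s2 : seq (int * lit V)) d1 d2 :
  norm (PBC (s1 ++ s2) (d1 + d2)) = vadd (norm (PBC s1 d1)) (norm (PBC s2 d2)).
Proof.
rewrite /norm /vadd /=; congr (_, _); first by apply/ffunP => x; rewrite !ffunE big_cat.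
by rewrite big_cat /= opprD addrACA.
Qed.

Lemma norm_pairC (t1 t2 : int * lit V) d :
  norm (PBC [:: t1; t2] d) = norm (PBC [:: t2; t1] d).
Proof.
rewrite /norm /=; congr (_, _); last by rewrite !big_cons !big_nil !addr0 [lconst t1 + _]addrC.
by apply/ffunP => x; rewrite !ffunE !big_cons !big_nil !addr0 addrC.
Qed.

Lemma norm_tautology (x : V) : norm (PBC [:: (1, Pos x); (1, Neg x)] 1) = ([ffun=> 0], 0).
Proof.
rewrite /norm /=; congr (_, _); last by rewrite !big_cons !big_nil /lconst /= subrr.
by apply/ffunP => z; rewrite !ffunE !big_cons !big_nil /lcoef /=; case: (x == z); rewrite ?addrN.
Qed.

Lemma cpder_weaken (H : pbc V -> Prop) s d l :
  cpder H (norm (PBC s d)) -> cpder H (norm (PBC (rcons s (1, l)) d)).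
Proof.
move=> hs; rewrite -cats1 -[d]addr0 norm_cat.
exact: cp_add hs (cp_lit H l).
Qed.

End Normalization.

Lemma norm_fsubst_le_f (V : finType) (s : V -> V) (w : subst V) :
  (forall x, w x = Pos (s x)) -> injective s -> norm (fsubst_le_f w) = ([ffun=> 0], 0).
Proof.
move=> ws s_inj; rewrite /norm /fsubst_le_f /=.
have -> : [seq (- t.1, t.2) | t <- tsubst w (fobj V)] = [seq (-1, Neg (s x)) | x <- enum V].
  by rewrite /tsubst /fobj -!map_comp; apply: eq_map => x /=; rewrite ws.
rewrite /fobj; congr (_, _); last first.
  by rewrite big_cat !big_map /= -big_split /= big1 ?subr0 // => x _; rewrite /lconst /= addrN.
apply/ffunP => z; rewrite !ffunE big_cat !big_map -[Finite.enum V]/(index_enum V).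
rewrite (reindex_inj s_inj) [LHS]/= -big_split /=.
by rewrite big1 // => x _; rewrite /lcoef /=; case: ifP; rewrite ?addr0 // addrN.
Qed.

Lemma swapE (V : finType) (u v x : V) : swap u v x = Pos (tperm u v x).
Proof.
rewrite /swap; case: tpermP => [->|->|/eqP/negbTE -> /eqP/negbTE ->]; rewrite ?eqxx //.
by case: eqP => // ->.
Qed.

Section Domination.
Variables (V : finType) (E : rel V).
Hypothesis Esym : symmetric E.

Lemma dominates_trans x y z : x != y -> x != z -> y != z ->
  dominates E x y -> dominates E y z -> dominates E x z.
Proof.
move=> nxy nxz nyz /subsetP dxy /subsetP dyz; apply/subsetP => w.
rewrite !inE => /andP [nwx Ezw].
have [ewy|nwy] := eqVneq w y.
  subst w; have /dxy : z \in nbhd E y :\ x by rewrite !inE Esym Ezw eq_sym nxz.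
  rewrite !inE => /andP [_ Exz].
  have /dyz : x \in nbhd E z :\ y by rewrite !inE Esym Exz nxy.
  by rewrite !inE Esym nyz => /andP [_ ->].
have /dyz : w \in nbhd E z :\ y by rewrite !inE nwy Ezw.
rewrite !inE => /andP [nwz Eyw].
have /dxy : w \in nbhd E y :\ x by rewrite !inE nwx Eyw.
by rewrite !inE nwz => /andP [_ ->].
Qed.

Lemma dominates_nonadj x y b : dominates E x y -> b != x -> ~~ E x b -> ~~ E y b.
Proof.
move=> /subsetP dxy nbx nExb; apply/negP => Eyb.
have /dxy : b \in nbhd E y :\ x by rewrite !inE Eyb nbx.
by rewrite !inE (negbTE nExb) andbF.
Qed.

Lemma nonadj_tperm x y a b : dominates E x y -> a != y -> b != y -> a != b ->
  ~~ E a b -> ~~ E (tperm x y a) (tperm x y b).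
Proof.
move=> dxy nay nby nab nEab.
have [eax|nax] := eqVneq a x.
  rewrite eax tpermL tpermD 1?eq_sym //; last by rewrite -eax eq_sym.
  by apply: dominates_nonadj dxy _ _; rewrite -?eax // eq_sym.
have [ebx|nbx] := eqVneq b x.
  rewrite ebx tpermL tpermD 1?eq_sym // Esym.
  by apply: dominates_nonadj dxy _ _; rewrite -?ebx // Esym.
by rewrite !tpermD 1?eq_sym // eq_sym.
Qed.

End Domination.

Section NegatedClause.
Variables (V : finType) (H : pbc V -> Prop) (u v : V).
Hypothesis Hneg : H (pbneg (domcl u v)).

Lemma cpder_unit_pos : cpder H (norm (PBC [:: (1, Pos v)] 1)).
Proof.
have -> : norm (PBC [:: (1, Pos v)] 1) =
          vadd (norm (pbneg (domcl u v))) (norm (lit_axiom (Pos u))).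
  rewrite /vadd /norm /=; congr (_, _).
    apply/ffunP => z; rewrite !ffunE !big_cons !big_nil /lcoef /=.
    by case: (u == z); case: (v == z).
  by rewrite !big_cons !big_nil /lconst /=.
exact: cp_add (cp_ax Hneg) (cp_lit H _).
Qed.

Lemma cpder_unit_neg : cpder H (norm (PBC [:: (1, Neg u)] 1)).
Proof.
have -> : norm (PBC [:: (1, Neg u)] 1) =
          vadd (norm (pbneg (domcl u v))) (norm (lit_axiom (Neg v))).
  rewrite /vadd /norm /=; congr (_, _).
    apply/ffunP => z; rewrite !ffunE !big_cons !big_nil /lcoef /=.
    by case: (u == z); case: (v == z).
  by rewrite !big_cons !big_nil /lconst /=.
exact: cp_add (cp_ax Hneg) (cp_lit H _).
Qed.

Lemma cpder_clause_pos l : cpder H (norm (PBC [:: (1, Pos v); (1, l)] 1)).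
Proof. exact: (cpder_weaken l cpder_unit_pos). Qed.

Lemma cpder_clause_neg l : cpder H (norm (PBC [:: (1, Neg u); (1, l)] 1)).
Proof. exact: (cpder_weaken l cpder_unit_neg). Qed.

End NegatedClause.

Section SwapDominated.
Variables (V : finType) (E : rel V) (gt : rel V) (u v : V) (D H : pbc V -> Prop).
Hypotheses (Esym : symmetric E) (gt_irr : irreflexive gt) (gt_trans : transitive gt).
Hypotheses (huv : u != v) (hdom : dominates E u v) (hgt : gt u v).
Hypothesis hD : forall C, D C -> exists x y : V,
  [/\ C = domcl x y, x != y, dominates E x y, gt x y & (x = u \/ gt x u)].
Hypothesis hDall : forall x y : V, x != y -> dominates E x y -> gt x y -> gt x u ->
  D (domcl x y).
Hypotheses (HFG : forall C, FG E C -> H C) (HD : forall C, D C -> H C).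
Hypothesis Hneg : H (pbneg (domcl u v)).

Lemma cpder_swap_FG C : FG E C -> cpder H (norm (pbsubst (swap u v) C)).
Proof.
case=> a [b [nab [nEab ->]]]; rewrite /pbsubst /tsubst /= !swapE /=.
have [->|nav] := eqVneq a v.
  by rewrite tpermR; exact: (cpder_clause_neg Hneg).
have [->|nbv] := eqVneq b v.
  by rewrite tpermR norm_pairC; exact: (cpder_clause_neg Hneg).
apply/cp_ax/HFG; exists (tperm u v a), (tperm u v b); split.
  by rewrite (inj_eq perm_inj).
by split=> //; exact: nonadj_tperm.
Qed.

Lemma cpder_swap_D C : D C -> cpder H (norm (pbsubst (swap u v) C)).
Proof.
move=> DC; have [x [y [eC nxy dxy _ hxu]]] := hD DC.
rewrite eC /domcl /pbsubst /tsubst /= !swapE /=.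
case: hxu => [->|gxu].
  by rewrite tpermL; exact: (cpder_clause_pos Hneg).
have nux : u != x by apply/eqP => exu; rewrite exu gt_irr in gxu.
have nvx : v != x by apply/eqP => exv; move: (gt_trans gxu hgt); rewrite exv gt_irr.
rewrite (tpermD nux nvx).
have [eyu|nyu] := eqVneq y u.
  subst y; rewrite tpermL; apply/cp_ax/HD.
  have nxv : x != v by rewrite eq_sym.
  exact: (hDall nxv (dominates_trans Esym nxy nxv huv dxy hdom) (gt_trans gxu hgt) gxu).
have [eyv|nyv] := eqVneq y v.
  by rewrite eyv tpermR norm_pairC; exact: (cpder_clause_neg Hneg).
by rewrite tpermD 1?eq_sym //; apply/cp_ax/HD; rewrite eC in DC.
Qed.

End SwapDominated.

Theorem mainTheorem12 (V : finType) (E : rel V)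
  (Esym : symmetric E) (Eirr : irreflexive E)
  (gt : rel V) (gt_irr : irreflexive gt) (gt_trans : transitive gt)
  (gt_total : forall x y : V, x != y -> gt x y || gt y x)
  (u v : V) (huv : u != v) (hdom : dominates E u v) (hgt : gt u v)
  (D : pbc V -> Prop)
  (hD : forall C, D C -> exists x y : V,
      [/\ C = domcl x y, x != y, dominates E x y, gt x y & (x = u \/ gt x u)])
  (hDall : forall x y : V, x != y -> dominates E x y -> gt x y -> gt x u ->
      D (domcl x y))
  (k : option int) :
  implies_set
    (pbU (pbU (pbU (FG E) D) (pb1 (f_le_km1 k))) (pb1 (pbneg (domcl u v))))
    (pbU (setsubst (swap u v) (pbU (pbU (FG E) D) (pb1 (domcl u v))))
          (pb1 (fsubst_le_f (swap u v)))).
Proof.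
set H := pbU _ _.
have HFG C : FG E C -> H C by left; left; left.
have HD C : D C -> H C by left; left; right.
have Hneg : H (pbneg (domcl u v)) by right.
move=> _ [[C [hC ->]] | ->]; left.
- case: hC => [[hC | hC] | ->].
  + exact: (cpder_swap_FG Esym hdom HFG Hneg hC).
  + exact: (cpder_swap_D Esym gt_irr gt_trans huv hdom hgt hD hDall HD Hneg hC).
  + by rewrite /pbsubst /tsubst /= !swapE tpermL tpermR; exact: (cpder_clause_pos Hneg).
- rewrite (norm_fsubst_le_f (swapE u v) perm_inj) -(norm_tautology v).
  exact: (cpder_clause_pos Hneg).
Qed.
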